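(* Let $(P_1,\dots,P_J)$ be a stochastically rationalizable stochastic demand system assigning probability zero to patches that lie on more than one budget plane, with vector representation $\pi=(\pi_{-J}',\pi_J')'$. For $k\in\{1,\dots,G\}$ and $z\ge0$ let $F_k(z)=P_J(\{y:y_k\le z\})$. Then $F_k(z)$ is bounded from below by $$\min_{\nu\in\mathbf R^H_+}\Big\{\sum_{i\in\{1,\dots,I_J\}:\ \overline d_k(i|J)\le z}e_i'A_J\nu\Big\}\quad\text{s.t. } A_{-J}\nu=\pi_{-J},$$ and from above by $$\max_{\nu\in\mathbf R^H_+}\Big\{\sum_{i\in\{1,\dots,I_J\}:\ \underline d_k(i|J)\le z}e_i'A_J\nu\Big\}\quad\text{s.t. } A_{-J}\nu=\pi_{-J},$$ where $e_i$ is the $i$-th unit vector of $\mathbf R^{I_J}$.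
   Context: Budget planes $\mathcal B_j=\{y\in\mathbf R^G_+:p_j'y=1\}$, $p_j\in\mathbf R^G_{++}$. Patches are cells of the coarsest partition of $\bigcup_j\mathcal B_j$ such that each cell is, for every $j$, entirely on, strictly above or strictly below $\mathcal B_j$; patches on more than one budget plane are dropped, $x_{1|j},\dots,x_{I_j|j}$ are the remaining patches in $\mathcal B_j$, $I=\sum_jI_j$, with fixed representatives $y^*_{i|j}\in x_{i|j}$. A demand vector $(d_1,\dots,d_J)\in\prod_j\mathcal B_j$ is rationalizable if some strictly increasing $u:\mathbf R^G_+\to\mathbf R$ has $d_j\in\arg\max_{\mathcal B_j}u$ for all $j$. A stochastic demand system $(P_1,\dots,P_J)$ ($P_j$ a probability on $\mathcal B_j$) is stochastically rationalizable if some probability on $\prod_j\mathcal B_j$ concentrated on rationalizable demand vectors has marginals $P_1,\dots,P_J$. Its vector representation $\pi\in\mathbf R^I$ has $j$-th block $(P_j(x_{1|j}),\dots,P_j(x_{I_j|j}))$. $A\in\{0,1\}^{I\times H}$ has as columns (each once) exactly the binary $I$-vectors with one $1$ per block, at position $i_j$ in block $j$, such that $(y^*_{i_1|1},\dots,y^*_{i_J|J})$ is rationalizable. $A_J,\pi_J$ denote rows/entries of block $J$ and $A_{-J},\pi_{-J}$ the rest. $\underline d_k(i|J)=\inf\{y_k:y\in x_{i|J}\}$, $\overline d_k(i|J)=\sup\{y_k:y\in x_{i|J}\}$. *)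

From HB Require Import structures.
From mathcomp Require Import all_boot all_order all_algebra.
From mathcomp Require Import all_classical all_reals all_analysis.
Set Implicit Arguments. Unset Strict Implicit. Unset Printing Implicit Defensive.
Import Order.TTheory GRing.Theory Num.Theory.
Local Open Scope classical_set_scope.
Local Open Scope ring_scope.

(* Bundles in R^G are G-tuples (with MathComp-Analysis' product sigma-algebra
   on tuples, i.e. the Borel sigma-algebra of R^G); demand profiles
   (d_1,...,d_J) are J-tuples of bundles (product sigma-algebra). *)

Section Defs.
Variables (R : realType) (G J : nat).
Implicit Types (y x : G.-tuple R) (p : 'I_J -> G.-tuple R).

Definition dotp (q y : G.-tuple R) : R := \sum_(g < G) tnth q g * tnth y g.

Definition nonneg y : Prop := forall g, 0 <= tnth y g.

Definition budget (q : G.-tuple R) : set (G.-tuple R) :=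
  [set y | nonneg y /\ dotp q y = 1].

Definition strictly_increasing (u : G.-tuple R -> R) : Prop :=
  forall x y, nonneg x -> nonneg y -> (forall g, tnth y g <= tnth x g) ->
    x <> y -> u y < u x.

Definition rationalizable p (d : J.-tuple (G.-tuple R)) : Prop :=
  (forall j, budget (p j) (tnth d j)) /\
  exists u, strictly_increasing u /\
    forall j y, budget (p j) y -> u y <= u (tnth d j).

Definition side (q y : G.-tuple R) : option bool :=
  if dotp q y == 1 then None else Some (1 < dotp q y).

Definition sgnvec := {ffun 'I_J -> option bool}.

(* The cells of the coarsest partition of the union of the budget planes that
   are, for every j, on / strictly above / strictly below B_j, are exactly the
   nonempty sets patch_set p s. *)
Definition patch_set p (s : sgnvec) : set (G.-tuple R) :=
  [set y | (exists j, budget (p j) y) /\ forall j, side (p j) y = s j].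

Definition patch_in p (j : 'I_J) (s : sgnvec) : Prop :=
  s j = None /\ (forall j', j' != j -> s j' != None) /\ patch_set p s !=set0.

Definition blk p (j : 'I_J) : {set sgnvec} := [set s | `[< patch_in p j s >]].

Definition multi_plane (s : sgnvec) : bool := (1 < #|[set j | s j == None]|)%N.

(* columns of A: choices of one patch per budget, c j in blk p j, such that the
   profile of representatives (rep (c 1), ..., rep (c J)) is rationalizable.
   A column c has entry 1 in row (j,s) iff c j = s. *)
Definition colT := {ffun 'I_J -> sgnvec}.

Definition rep_profile (rep : sgnvec -> G.-tuple R) (c : colT)
  : J.-tuple (G.-tuple R) := [tuple rep (c j) | j < J].

Definition cols p (rep : sgnvec -> G.-tuple R) : {set colT} :=
  [set c : colT | [forall j, c j \in blk p j] &&
           `[< rationalizable p (rep_profile rep c) >]].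

Definition Anu p rep (nu : colT -> R) (j : 'I_J) (s : sgnvec) : R :=
  \sum_(c in cols p rep | c j == s) nu c.

Definition dlow p (k : 'I_G) (s : sgnvec) : R :=
  inf [set tnth y k | y in patch_set p s].
Definition dbar p (k : 'I_G) (s : sgnvec) : R :=
  sup [set tnth y k | y in patch_set p s].

Definition stoch_rationalizable p
    (P : 'I_J -> probability (G.-tuple R) R) : Prop :=
  exists mu : probability (J.-tuple (G.-tuple R)) R,
    (exists E, measurable E /\ E `<=` rationalizable p /\ mu E = 1%E) /\
    forall j A, measurable A -> mu [set d | A (tnth d j)] = P j A.

Definition feasible p rep (P : 'I_J -> probability (G.-tuple R) R)
    (jJ : 'I_J) (nu : colT -> R) : Prop :=
  (forall c, c \in cols p rep -> 0 <= nu c) /\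
  forall j, j != jJ -> forall s, s \in blk p j ->
    (Anu p rep nu j s)%:E = P j (patch_set p s).

Definition obj_lo p rep (jJ : 'I_J) (k : 'I_G) (z : R) (nu : colT -> R) : R :=
  \sum_(s in blk p jJ | dbar p k s <= z) Anu p rep nu jJ s.

Definition obj_hi p rep (jJ : 'I_J) (k : 'I_G) (z : R) (nu : colT -> R) : R :=
  \sum_(s in blk p jJ | dlow p k s <= z) Anu p rep nu jJ s.

End Defs.

Definition last_budget (J : nat) (hJ : (0 < J)%N) : 'I_J :=
  Ordinal (etrans (ltn_predL J) hJ).

From HB Require Import structures.
From mathcomp Require Import all_boot all_order all_algebra.
From mathcomp Require Import all_classical all_reals all_analysis.
From mathcomp Require Import measurable_realfun lra.
Import Order.TTheory GRing.Theory Num.Theory.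
Local Open Scope classical_set_scope.
Local Open Scope ring_scope.
Set Implicit Arguments. Unset Strict Implicit. Unset Printing Implicit Defensive.

(* A stochastically rationalizable system is the family of marginals of a law
   concentrated on rationalizable demand profiles.  Up to a null set, such a
   profile visits one single-plane patch per budget, and whether a profile is
   rationalizable depends only on its position relative to every budget plane:
   the utility levels of one rationalizable profile satisfy the Afriat-type
   inequalities for every profile with the same positions, and then a minimum
   of kinked affine functions of the expenditures rationalizes it.  Hence the
   probabilities of the cells "one patch per budget, rationalizable
   representatives" give a nonnegative nu with A nu = pi.  The event
   {y_k <= z} under P_J contains every patch of B_J whose supremum of y_k is
   <= z and is contained, up to a null set, in the union of the patches whose
   infimum of y_k is <= z. *)

Section Budget.
Variables (R : realType) (G : nat).
Implicit Types (q x y : G.-tuple R).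

Lemma dotp_ge0 q y : (forall g, 0 <= tnth q g) -> nonneg y -> 0 <= dotp q y.
Proof. by move=> q0 y0; apply: sumr_ge0 => g _; apply: mulr_ge0. Qed.

Lemma ltr_dotp q x y : (forall g, 0 < tnth q g) ->
  (forall g, tnth x g <= tnth y g) -> x <> y -> dotp q x < dotp q y.
Proof.
move=> q0 xy nexy.
have [g nexyg] : exists g, tnth x g != tnth y g.
  apply: contra_notP nexy => /forallNP nexy; apply: eq_from_tnth => g.
  by apply/eqP; apply: contra_notT (nexy g).
rewrite /dotp (bigD1 g) //= [ltRHS](bigD1 g) //=.
apply: ltr_leD; first by rewrite ltr_pM2l // lt_neqAle nexyg xy.
by apply: ler_sum => i _; rewrite ler_pM2l.
Qed.

Lemma budget_coord_le q y k : (forall g, 0 <= tnth q g) -> 0 < tnth q k ->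
  budget q y -> tnth y k <= (tnth q k)^-1.
Proof.
move=> q0 qk [y0 qy]; rewrite -(ler_pM2l qk) mulfV ?gt_eqF // -qy.
rewrite /dotp (bigD1 k) //= lerDl.
by apply: sumr_ge0 => g _; apply: mulr_ge0.
Qed.

Variant side_spec q y : option bool -> Type :=
  | SideOn of dotp q y = 1 : side_spec q y None
  | SideAbove of 1 < dotp q y : side_spec q y (Some true)
  | SideBelow of dotp q y < 1 : side_spec q y (Some false).

Lemma sideP q y : side_spec q y (side q y).
Proof.
by rewrite /side; case: (ltgtP (dotp q y) 1) => qy; constructor.
Qed.

Lemma side_budget q y : budget q y -> side q y = None.
Proof. by case=> _ qy; rewrite /side qy eqxx. Qed.

Lemma side_eq_dotp q x y : side q x = side q y ->
  (dotp q x = 1 -> dotp q y = 1) /\ (dotp q x < 1 -> dotp q y < 1).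
Proof.
by case: sideP => qx; case: sideP => qy // _; split=> h; lra.
Qed.

Lemma lt_optimal_of_dotp_lt1 (u : G.-tuple R -> R) q x y :
  strictly_increasing u -> budget q x -> (forall y', budget q y' -> u y' <= u x) ->
  nonneg y -> dotp q y < 1 -> u y < u x.
Proof.
move=> uinc [x0 qx] xopt y0 qy.
(* [y + t x] lies on the budget plane and dominates [y]. *)
pose t := 1 - dotp q y; have t0 : 0 < t by rewrite subr_gt0.
pose y' := [tuple tnth y g + t * tnth x g | g < G].
have y'E g : tnth y' g = tnth y g + t * tnth x g by rewrite tnth_mktuple.
have yy' g : tnth y g <= tnth y' g by rewrite y'E lerDl mulr_ge0 // ltW.
have y'0 : nonneg y' := fun g => le_trans (y0 g) (yy' g).
have qy' : dotp q y' = 1.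
  rewrite /dotp (eq_bigr (fun g => tnth q g * tnth y g + t * (tnth q g * tnth x g)));
    last by move=> g _; rewrite y'E mulrDr mulrCA.
  by rewrite big_split /= -mulr_sumr -/(dotp q y) -/(dotp q x) qx mulr1 addrC subrK.
have ney' : y' <> y.
  move=> e; move: qx; rewrite /dotp big1 => [/esym/eqP|g _]; first by rewrite oner_eq0.
  have /eqP := congr1 (fun v => tnth v g) e; rewrite y'E -subr_eq0 addrAC subrr add0r.
  by rewrite mulf_eq0 gt_eqF //= => /eqP ->; rewrite mulr0.
exact: lt_le_trans (uinc _ _ y'0 y0 yy' ney') (xopt _ (conj y'0 qy')).
Qed.

End Budget.

Section FiniteBounds.
Variable R : realType.

Lemma finite_pos_lbound (I : finType) (f : I -> R) :
  exists2 e, 0 < e & forall i, 0 < f i -> e <= f i.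
Proof.
exists (\big[Num.min/1]_(i | 0 < f i) f i); first exact: lt_bigmin.
by move=> i fi; exact: bigmin_le_cond.
Qed.

Lemma finite_ratio_ubound (I : finType) (f g : I -> R) :
  exists2 K, 0 < K & forall i, 0 < g i -> f i <= K * g i.
Proof.
exists (1 + \big[Num.max/0]_(i | 0 < g i) (f i / g i)).
  by rewrite ltr_wpDr // bigmax_ge_id.
move=> i gi; rewrite -ler_pdivrMr //.
apply: le_trans (le_bigmax_cond 0 (P := fun i => 0 < g i) (fun i => f i / g i) gi) _.
exact: ler_wpDl.
Qed.

End FiniteBounds.

Section Afriat.
Variables (R : realType) (G J : nat) (p : 'I_J -> G.-tuple R).
Hypotheses (J_gt0 : (0 < J)%N) (p_gt0 : forall j g, 0 < tnth (p j) g).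

Definition kink (a b t : R) := if 0 < t then a * t else b * t.

Lemma kink0 a b : kink a b 0 = 0.
Proof. by rewrite /kink ltxx mulr0. Qed.

Lemma kink_lt a b : 0 < a -> 0 < b -> {homo kink a b : s t / s < t}.
Proof.
move=> a0 b0 s t st; rewrite /kink; case: ifP => s0; case: ifP => t0.
- by rewrite ltr_pM2l.
- by move: (lt_trans s0 st); rewrite t0.
- by apply: (@le_lt_trans _ _ 0); [rewrite pmulr_rle0 // leNgt s0 | exact: mulr_gt0].
- by rewrite ltr_pM2l.
Qed.

Lemma rationalizable_of_levels (d : J.-tuple (G.-tuple R)) (U : 'I_J -> R) :
  (forall j, budget (p j) (tnth d j)) ->
  (forall i j, dotp (p i) (tnth d j) = 1 -> U j <= U i) ->
  (forall i j, dotp (p i) (tnth d j) < 1 -> U j < U i) ->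
  rationalizable p d.
Proof.
move=> dB Ule Ult; split=> //.
pose t i j := dotp (p i) (tnth d j) - 1.
have [e e0 eU] := finite_pos_lbound (fun ij : 'I_J * 'I_J => U ij.1 - U ij.2).
have [K K0 KU] := finite_ratio_ubound
  (fun ij : 'I_J * 'I_J => U ij.2 - U ij.1) (fun ij => t ij.1 ij.2).
(* Slope [K] above plane [i] makes [f i] exceed every level [U j] there; slope
   [e] below it keeps [f i] above every level strictly revealed below [U i]. *)
pose f i y := U i + kink K e (dotp (p i) y - 1).
have Uf i j : U j <= f i (tnth d j).
  rewrite /f -/(t i j); case: (ltgtP (dotp (p i) (tnth d j)) 1) => dij.
  - have tij : -1 <= t i j.
      by rewrite lerBrDr addNr; apply/dotp_ge0/(dB j).1 => g; exact/ltW.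
    have := eU (i, j); rewrite /= subr_gt0 => /(_ (Ult _ _ dij)) eij.
    rewrite /kink ifF; last by apply/negbTE; rewrite -leNgt subr_le0 ltW.
    by nra.
  - have := KU (i, j); rewrite /= subr_gt0 => /(_ dij).
    by rewrite /kink ifT ?subr_gt0 //; lra.
  - by rewrite /t dij subrr kink0 addr0; exact: Ule.
pose i0 := Ordinal J_gt0.
exists (fun y => \big[Num.min/f i0 y]_i f i y); split.
- move=> x y x0 y0 yx nexy.
  have fyx i : f i y < f i x.
    by rewrite ltrD2l kink_lt // ltrD2r ltr_dotp // => eyx; exact: nexy.
  apply: lt_bigmin => [|i _]; first exact: le_lt_trans (bigmin_le _ i0 _) (fyx i0).
  exact: le_lt_trans (bigmin_le _ i _) (fyx i).
- move=> j y [_ yj]; apply: le_trans (bigmin_le _ j _) _.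
  rewrite /f yj subrr kink0 addr0.
  by apply: le_bigmin => [|i _]; exact: Uf.
Qed.

Lemma rationalizable_same_sides (d d' : J.-tuple (G.-tuple R)) :
  rationalizable p d -> (forall j, nonneg (tnth d' j)) ->
  (forall i j, side (p i) (tnth d' j) = side (p i) (tnth d j)) ->
  rationalizable p d'.
Proof.
move=> [dB [u [uinc uopt]]] d'0 sides.
apply: (@rationalizable_of_levels _ (fun j => u (tnth d j))) => [j|i j|i j].
- by split=> //; apply: (side_eq_dotp (esym (sides j j))).1; exact: (dB j).2.
- move=> /(side_eq_dotp (sides i j)).1 dij.
  by apply: uopt; split=> //; exact: (dB j).1.
- move=> /(side_eq_dotp (sides i j)).2 dij.
  exact: lt_optimal_of_dotp_lt1 uinc (dB i) (uopt i) (dB j).1 dij.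
Qed.

End Afriat.

Section Patches.
Variables (R : realType) (G J : nat) (p : 'I_J -> G.-tuple R).
Implicit Types (y : G.-tuple R) (s : sgnvec J) (d : J.-tuple (G.-tuple R)).

Definition pattern y : sgnvec J := [ffun j => side (p j) y].

Lemma patch_set_pattern s y : patch_set p s y -> pattern y = s.
Proof. by case=> _ ys; apply/ffunP => j; rewrite ffunE ys. Qed.

Lemma patch_set_nonneg s y : patch_set p s y -> nonneg y.
Proof. by case=> -[j [y0 _]]. Qed.

Lemma patch_set_budget j s y : s j = None -> patch_set p s y -> budget (p j) y.
Proof.
move=> sj ys; split; first exact: patch_set_nonneg ys.
by case: ys => _ /(_ j); rewrite sj; case: sideP.
Qed.

Lemma budget_patch_set j y : budget (p j) y -> patch_set p (pattern y) y.
Proof. by move=> yj; split=> [|i]; [exists j | rewrite ffunE]. Qed.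

Lemma trivIset_patch_set : trivIset setT (patch_set p).
Proof.
move=> s t _ _ [y [ys yt]].
by rewrite -(patch_set_pattern ys) -(patch_set_pattern yt).
Qed.

Definition multi_set : set (G.-tuple R) :=
  \bigcup_(s in [set s | multi_plane s]) patch_set p s.

Lemma pattern_blk j y : budget (p j) y -> ~ multi_set y -> pattern y \in blk p j.
Proof.
move=> yj ny; rewrite inE asboolE; split; first by rewrite ffunE side_budget.
split; last by exists y; exact: budget_patch_set yj.
move=> i ij; apply/eqP => yi; apply: ny.
exists (pattern y); last exact: budget_patch_set yj.
have ji : (1 < #|[set j; i]%SET|)%N by rewrite cards2 eq_sym ij.
apply: leq_trans ji _.
apply: subset_leq_card; apply/fintype.subsetP => l; rewrite !inE => /orP[] /eqP ->.
  by rewrite /= ffunE side_budget.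
by rewrite /= yi.
Qed.

Definition cell (c : colT J) : set (J.-tuple (G.-tuple R)) :=
  [set d | forall j, patch_set p (c j) (tnth d j)].

Lemma trivIset_cell : trivIset setT cell.
Proof.
move=> c c' _ _ [d [dc dc']]; apply/ffunP => j.
by apply: trivIset_patch_set => //; exists (tnth d j).
Qed.

Lemma rationalizable_in_cell (rep : sgnvec J -> G.-tuple R) d :
  (0 < J)%N -> (forall j g, 0 < tnth (p j) g) ->
  (forall j s, s \in blk p j -> patch_set p s (rep s)) ->
  rationalizable p d -> (forall j, ~ multi_set (tnth d j)) ->
  exists2 c, c \in cols p rep & cell c d.
Proof.
move=> J_gt0 p_gt0 rep_patch dR dM; have [dB _] := dR.
have dblk j : pattern (tnth d j) \in blk p j := pattern_blk (dB j) (dM j).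
exists [ffun j => pattern (tnth d j)]; last first.
  by move=> j; rewrite ffunE; exact: budget_patch_set (dB j).
rewrite inE; apply/andP; split; first by apply/forallP => j; rewrite ffunE.
apply/asboolP; apply: rationalizable_same_sides dR _ _ => // [j|i j];
  rewrite /rep_profile tnth_mktuple ffunE.
- exact: patch_set_nonneg (rep_patch _ _ (dblk j)).
- by have [_ ->] := rep_patch _ _ (dblk j); rewrite ffunE.
Qed.

Lemma dlow_le k s y : patch_set p s y -> dlow p k s <= tnth y k.
Proof.
move=> ys; apply: ge_inf; last by exists y.
by exists 0 => _ [y' y's <-]; exact: patch_set_nonneg y's k.
Qed.

Lemma le_dbar k j s y : (forall g, 0 < tnth (p j) g) -> s \in blk p j ->
  patch_set p s y -> tnth y k <= dbar p k s.
Proof.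
move=> pj; rewrite inE asboolE => -[sj _] ys; apply: sup_upper_bound; last by exists y.
split; first by exists (tnth y k), y.
exists (tnth (p j) k)^-1 => _ [y' y's <-].
by apply: budget_coord_le (patch_set_budget sj y's) => // g; exact: ltW.
Qed.

End Patches.

Section FiniteFamilies.
Context d (T : measurableType d).

Lemma measurable_exists (I : finType) (F : I -> set T) :
  (forall i, measurable (F i)) -> measurable [set x | exists i, F i x].
Proof.
move=> mF; rewrite (_ : [set x | _] = \bigcup_i F i).
  exact: fin_bigcup_measurable finite_finset _.
by apply/seteqP; split=> x [i]; exists i.
Qed.

Lemma measurable_forall (I : finType) (F : I -> set T) :
  (forall i, measurable (F i)) -> measurable [set x | forall i, F i x].
Proof.
move=> mF; rewrite (_ : [set x | _] = \bigcap_i F i).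
  exact: fin_bigcap_measurable finite_finset _.
by apply/seteqP; split=> x Fx i //; exact: Fx.
Qed.

Lemma measurable_bool_fun (b : T -> bool) :
  measurable_fun setT b -> measurable [set x | b x].
Proof. by move=> mb; rewrite -[X in measurable X]setTI; exact: mb. Qed.

Variables (R : realType) (mu : {measure set T -> \bar R}).

Lemma measure_fin_bigcup_pred (I : finType) (P : {pred I}) (F : I -> set T) :
  (forall i, measurable (F i)) -> trivIset setT F ->
  mu (\bigcup_(i in [set` P]) F i) = (\sum_(i | P i) mu (F i))%E.
Proof.
move=> mF tF; rewrite measure_fin_bigcup //; last exact: sub_trivIset tF.
by rewrite -(bigfs _ (index_enum_uniq I)) // => i _; rewrite mem_index_enum.
Qed.

Lemma measure_fin_bigcup0 (I : finType) (D : set I) (F : I -> set T) :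
  (forall i, measurable (F i)) -> (forall i, D i -> mu (F i) = 0%E) ->
  mu (\bigcup_(i in D) F i) = 0%E.
Proof.
move=> mF F0; apply/eqP; rewrite eq_le measure_ge0 andbT.
rewrite (le_trans (content_sub_fsum mu finite_finset _ _ (@subset_refl _ _))) ?fsbig1 //.
exact: fin_bigcup_measurable finite_finset _.
Qed.

End FiniteFamilies.

Section Measurability.
Variables (R : realType) (G J : nat) (p : 'I_J -> G.-tuple R).

Lemma measurable_dotp (q : G.-tuple R) : measurable_fun setT (dotp q).
Proof.
by apply: measurable_sum => g; apply: measurable_funM => //; exact: measurable_tnth.
Qed.

Lemma measurable_side (q : G.-tuple R) o : measurable [set y | side q y = o].
Proof.
have mdotp := measurable_dotp q.
case: o => [[]|].
- rewrite (_ : [set y | _] = [set y | 1 < dotp q y]).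
    exact/measurable_bool_fun/measurable_fun_ltr.
  by apply/seteqP; split=> y /=; case: sideP => // qy h; exfalso; lra.
- rewrite (_ : [set y | _] = [set y | dotp q y < 1]).
    exact/measurable_bool_fun/measurable_fun_ltr.
  by apply/seteqP; split=> y /=; case: sideP => // qy h; exfalso; lra.
- rewrite (_ : [set y | _] = dotp q @^-1` [set 1]).
    by rewrite -[X in measurable X]setTI; exact: mdotp measurableT _ (measurable_set1 1).
  by apply/seteqP; split=> y /=; case: sideP => // qy h; exfalso; lra.
Qed.

Lemma measurable_budget (q : G.-tuple R) : measurable (budget q).
Proof.
rewrite (_ : budget q = [set y | forall g, 0 <= tnth y g] `&` [set y | side q y = None]).
  apply: measurableI; last exact: measurable_side.
  have mcoord g : measurable [set y : G.-tuple R | 0 <= tnth y g].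
    by apply/measurable_bool_fun/measurable_fun_ler => //; exact: measurable_tnth.
  exact: measurable_forall mcoord.
apply/seteqP; split=> y [y0 qy]; split=> //.
  exact: side_budget (conj y0 qy).
by move: qy => /=; case: sideP.
Qed.

Lemma measurable_patch_set s : measurable (patch_set p s).
Proof.
apply: measurableI; first exact: measurable_exists (fun j => measurable_budget (p j)).
exact: measurable_forall (fun j => measurable_side (p j) (s j)).
Qed.

Lemma measurable_patch_union (D : set (sgnvec J)) :
  measurable (\bigcup_(s in D) patch_set p s).
Proof.
by apply: fin_bigcup_measurable finite_finset _ => s _; exact: measurable_patch_set.
Qed.

Lemma measurable_multi_set : measurable (multi_set p).
Proof. exact: measurable_patch_union. Qed.

Lemma measurable_tnth_preimage (j : 'I_J) (A : set (G.-tuple R)) : measurable A ->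
  measurable [set d : J.-tuple (G.-tuple R) | A (tnth d j)].
Proof. by move=> mA; rewrite -[X in measurable X]setTI; exact: measurable_tnth. Qed.

Lemma measurable_cell c : measurable (cell p c).
Proof.
apply: measurable_forall => j.
exact: measurable_tnth_preimage (measurable_patch_set (c j)).
Qed.

Lemma measurable_tnth_le (k : 'I_G) (z : R) :
  measurable [set y : G.-tuple R | tnth y k <= z].
Proof. by apply/measurable_bool_fun/measurable_fun_ler => //; exact: measurable_tnth. Qed.

End Measurability.

Section ColumnWeights.
Variables (R : realType) (G J : nat) (p : 'I_J -> G.-tuple R).
Variables (rep : sgnvec J -> G.-tuple R) (P : 'I_J -> probability (G.-tuple R) R).
Hypotheses (J_gt0 : (0 < J)%N) (p_gt0 : forall j g, 0 < tnth (p j) g).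
Hypothesis rep_patch : forall j s, s \in blk p j -> patch_set p s (rep s).
Hypothesis P_multi0 : forall j, P j (multi_set p) = 0%E.

Lemma column_weights : stoch_rationalizable p P ->
  exists nu : colT J -> R, (forall c, 0 <= nu c) /\
    forall j s, s \in blk p j -> (Anu p rep nu j s)%:E = P j (patch_set p s).
Proof.
case=> mu [[E [mE [ER muE]]] marg].
pose N := ~` E `|` \bigcup_(j : 'I_J) [set d | multi_set p (tnth d j)].
have mmulti (j : 'I_J) := measurable_tnth_preimage j (measurable_multi_set p).
have mU : measurable (\bigcup_(j : 'I_J) [set d | multi_set p (tnth d j)]).
  exact: fin_bigcup_measurable finite_finset (fun j _ => mmulti j).
have mN : measurable N by apply: measurableU => //; exact: measurableC.
have muN : mu N = 0%E.
  apply: null_set_setU => //; first exact: measurableC.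
    by have := probability_setC mu mE; rewrite muE subee.
  apply: measure_fin_bigcup0 => // j _.
  exact: etrans (marg j _ (measurable_multi_set p)) (P_multi0 j).
(* Off the null set [N], a profile lies in the cell of a column of [A]. *)
exists (fun c => fine (mu (cell p c))); split=> [c|j s sj].
  exact/fine_ge0/measure_ge0.
pose C := [pred c | (c \in cols p rep) && (c j == s)].
have mC : measurable (\bigcup_(c in [set` C]) cell p c).
  by apply: fin_bigcup_measurable finite_finset _ => c _; exact: measurable_cell.
have -> : (Anu p rep (fun c => fine (mu (cell p c))) j s)%:E =
    mu (\bigcup_(c in [set` C]) cell p c).
  rewrite measure_fin_bigcup_pred; [|exact: measurable_cell|exact: trivIset_cell].
  rewrite /Anu EFin_sum_fine // => c _.
  exact: fin_num_measure (measurable_cell p c).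
have mS := measurable_tnth_preimage j (measurable_patch_set p s).
rewrite -marg; last exact: measurable_patch_set.
apply/le_anti/andP; split.
  apply: le_measure; rewrite ?inE // => d [c /andP[_ /eqP <-]]; exact.
rewrite -(measureU0 mC mN muN).
apply: le_measure; rewrite ?inE //; first exact: measurableU.
move=> d ds; have [Ed|nEd] := pselect (E d); last by right; left.
have [dM|ndM] := pselect (exists i, multi_set p (tnth d i)).
  by right; right; case: dM => i; exists i.
have [c cc dc] := rationalizable_in_cell J_gt0 p_gt0 rep_patch (ER d Ed)
  (fun i dM => ndM (ex_intro _ i dM)).
left; exists c => //; rewrite /= inE cc /=.
by apply/eqP; apply: trivIset_patch_set => //; exists (tnth d j).
Qed.

End ColumnWeights.

Section CdfBounds.
Variables (R : realType) (G J : nat) (p : 'I_J -> G.-tuple R).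
Variables (rep : sgnvec J -> G.-tuple R) (j : 'I_J) (mu : probability (G.-tuple R) R).
Variables (nu : colT J -> R) (k : 'I_G) (z : R).
Hypothesis nuE : forall s, s \in blk p j -> (Anu p rep nu j s)%:E = mu (patch_set p s).

Lemma sum_Anu_blk (S : pred (sgnvec J)) :
  (\sum_(s in blk p j | S s) Anu p rep nu j s)%:E =
  mu (\bigcup_(s in [set` [pred s | (s \in blk p j) && S s]]) patch_set p s).
Proof.
rewrite measure_fin_bigcup_pred; [|exact: measurable_patch_set|exact: trivIset_patch_set].
by rewrite -sumEFin; apply: eq_bigr => s /andP[sj _]; exact: nuE.
Qed.

Lemma obj_lo_le_cdf : (forall g, 0 < tnth (p j) g) ->
  ((obj_lo p rep j k z nu)%:E <= mu [set y | (tnth y k <= z)%R])%E.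
Proof.
move=> pj; rewrite /obj_lo sum_Anu_blk.
apply: le_measure; rewrite ?inE; [exact: measurable_patch_union|exact: measurable_tnth_le|].
by move=> y [s /andP[sj sz] ys]; apply: le_trans sz; exact: le_dbar pj sj ys.
Qed.

Lemma cdf_le_obj_hi : mu (budget (p j)) = 1%E -> mu (multi_set p) = 0%E ->
  (mu [set y | (tnth y k <= z)%R] <= (obj_hi p rep j k z nu)%:E)%E.
Proof.
move=> muB muM; rewrite /obj_hi sum_Anu_blk.
set U := \bigcup_(s in _) _; have mU : measurable U by exact: measurable_patch_union.
have mB := measurable_budget (p j).
have mN : measurable (multi_set p `|` ~` budget (p j)).
  by apply: measurableU; [exact: measurable_multi_set | exact: measurableC].
have muN : mu (multi_set p `|` ~` budget (p j)) = 0%E.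
  apply: null_set_setU => //; [exact: measurable_multi_set | exact: measurableC |].
  by have := probability_setC mu mB; rewrite muB subee.
rewrite -(measureU0 mU mN muN).
apply: le_measure; rewrite ?inE; [exact: measurable_tnth_le | exact: measurableU |].
move=> y yz; have [yB|nyB] := pselect (budget (p j) y); last by right; right.
have [yM|nyM] := pselect (multi_set p y); first by right; left.
left; exists (pattern p y); last exact: budget_patch_set yB.
rewrite /= inE pattern_blk //=.
exact: le_trans (dlow_le k (budget_patch_set yB)) yz.
Qed.

End CdfBounds.

Theorem corollary3 (R : realType) (G J : nat) (hJ : (0 < J)%N)
  (p : 'I_J -> G.-tuple R) (hp : forall j g, 0 < tnth (p j) g)
  (rep : sgnvec J -> G.-tuple R)
  (hrep : forall j s, s \in blk p j -> patch_set p s (rep s))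
  (P : 'I_J -> probability (G.-tuple R) R)
  (hPB : forall j, P j (budget (p j)) = 1%E)
  (hSR : stoch_rationalizable p P)
  (hmulti : forall j s, multi_plane s -> P j (patch_set p s) = 0%E)
  (k : 'I_G) (z : R) (hz : 0 <= z) :
  (ereal_inf [set (obj_lo p rep (last_budget hJ) k z nu)%:E
                | nu in feasible p rep P (last_budget hJ)]
     <= P (last_budget hJ) [set y | (tnth y k <= z)%R])%E /\
  (P (last_budget hJ) [set y | (tnth y k <= z)%R]
     <= ereal_sup [set (obj_hi p rep (last_budget hJ) k z nu)%:E
                | nu in feasible p rep P (last_budget hJ)])%E.
Proof.
set jJ := last_budget hJ.
have Pmulti j : P j (multi_set p) = 0%E.
  apply: measure_fin_bigcup0 => [s|s]; [exact: measurable_patch_set | exact: hmulti].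
have [nu [nu0 nuE]] := column_weights hJ hp hrep Pmulti hSR.
have nu_feas : feasible p rep P jJ nu.
  by split=> [c _|i _ s si]; [exact: nu0 | exact: nuE].
have Snu (obj : (colT J -> R) -> R) :
    [set (obj nu')%:E | nu' in feasible p rep P jJ] (obj nu)%:E by exists nu.
split.
- exact: le_trans (ereal_inf_lbound (Snu _)) (obj_lo_le_cdf k z (nuE jJ) (hp jJ)).
- apply: le_trans (cdf_le_obj_hi k z (nuE jJ) (hPB jJ) (Pmulti jJ)) _.
  exact: ereal_sup_ubound (Snu _).
Qed.
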